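(* $3/5<\hat q^2<2/3$.
   Context: For $q\in[0,1)$, $\mathrm{K}(q)=\int_0^{\pi/2}(1-q^2\sin^2\theta)^{-1/2}\,d\theta$ and $\mathrm{E}(q)=\int_0^{\pi/2}(1-q^2\sin^2\theta)^{1/2}\,d\theta$. $\hat q$ is the unique zero in $[1/\sqrt2,1)$ of $f(q)=(4q^4-5q^2+1)\mathrm{K}(q)+(-8q^4+8q^2-1)\mathrm{E}(q)$; moreover $f>0$ on $[1/\sqrt2,\hat q)$ and $f<0$ on $(\hat q,1)$. *)

From Stdlib Require Import Reals Lra.
From Coquelicot Require Import Coquelicot.
Open Scope R_scope.

Definition ellK (q : R) : R :=
  RInt (fun t => / sqrt (1 - q ^ 2 * (sin t) ^ 2)) 0 (PI / 2).
Definition ellE (q : R) : R :=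
  RInt (fun t => sqrt (1 - q ^ 2 * (sin t) ^ 2)) 0 (PI / 2).

Definition fq (q : R) : R :=
  (4 * q ^ 4 - 5 * q ^ 2 + 1) * ellK q + (- 8 * q ^ 4 + 8 * q ^ 2 - 1) * ellE q.

(* Writing m = q^2, the sign of fq at q = sqrt(3/5) and q = sqrt(2/3) is decided by
   bounding K and E in the parameter m.  The integrands depend on t only through
   x = sin t ^ 2 in [0, 1], so an affine bound A + B x on [0, 1] integrates to
   A pi/2 + B pi/4; affine bounds for sqrt(1 - m x) and 1 / sqrt(1 - m x) reduce to
   polynomial inequalities on [0, 1].  This gives fq(sqrt(3/5)) > 0 > fq(sqrt(2/3)),
   and the sign pattern of fq around its zero places \hat q strictly between the two. *)

From Stdlib Require Import Reals Lra.
From Coquelicot Require Import Coquelicot.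
Open Scope R_scope.

Lemma sin_sq_bounds (t : R) : 0 <= sin t ^ 2 <= 1.
Proof. pose proof (sin2_cos2 t) as H; unfold Rsqr in H; split; nra. Qed.

Lemma is_RInt_affine_sin_sq (A B : R) :
  is_RInt (fun t => A + B * sin t ^ 2) 0 (PI / 2) (A * (PI / 2) + B * (PI / 4)).
Proof.
  set (F := fun t => A * t + B * (t / 2 - sin t * cos t / 2)).
  replace (A * (PI / 2) + B * (PI / 4)) with (minus (F (PI / 2)) (F 0)).
  2: { unfold F, minus, plus, opp; simpl.
       rewrite sin_PI2, cos_PI2, sin_0, cos_0; field. }
  apply (is_RInt_derive (V := R_CompleteNormedModule)).
  - intros t _; unfold F; auto_derive; [easy|].
    pose proof (sin2_cos2 t) as H; unfold Rsqr in H.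
    replace (1 * cos t * cos t) with (1 - sin t * sin t) by lra; field.
  - intros t _; apply (ex_derive_continuous (V := R_NormedModule)).
    auto_derive; easy.
Qed.

Section AffineBoundsOnSinSq.

Variable g : R -> R.
Hypothesis g_cont : forall x, 0 <= x <= 1 -> continuous g x.

Lemma ex_RInt_comp_sin_sq : ex_RInt (fun t => g (sin t ^ 2)) 0 (PI / 2).
Proof.
  apply (ex_RInt_continuous (V := R_CompleteNormedModule)); intros t _.
  apply (continuous_comp (fun t => sin t ^ 2) g).
  - apply (ex_derive_continuous (V := R_NormedModule)); auto_derive; easy.
  - exact (g_cont _ (sin_sq_bounds t)).
Qed.

Lemma RInt_comp_sin_sq_lb (A B : R) :
  (forall x, 0 <= x <= 1 -> A + B * x <= g x) ->
  A * (PI / 2) + B * (PI / 4) <= RInt (fun t => g (sin t ^ 2)) 0 (PI / 2).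
Proof.
  intros Hle; rewrite <- (is_RInt_unique _ _ _ _ (is_RInt_affine_sin_sq A B)).
  apply RInt_le.
  - pose proof PI_RGT_0; lra.
  - eexists; apply is_RInt_affine_sin_sq.
  - exact ex_RInt_comp_sin_sq.
  - intros t _; exact (Hle _ (sin_sq_bounds t)).
Qed.

Lemma RInt_comp_sin_sq_ub (A B : R) :
  (forall x, 0 <= x <= 1 -> g x <= A + B * x) ->
  RInt (fun t => g (sin t ^ 2)) 0 (PI / 2) <= A * (PI / 2) + B * (PI / 4).
Proof.
  intros Hle; rewrite <- (is_RInt_unique _ _ _ _ (is_RInt_affine_sin_sq A B)).
  apply RInt_le.
  - pose proof PI_RGT_0; lra.
  - exact ex_RInt_comp_sin_sq.
  - eexists; apply is_RInt_affine_sin_sq.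
  - intros t _; exact (Hle _ (sin_sq_bounds t)).
Qed.

End AffineBoundsOnSinSq.

Lemma le_sqrt_of_sq_le (a b : R) : a ^ 2 <= b -> a <= sqrt b.
Proof.
  intros H; pose proof (sqrt_pos b); pose proof (sqrt_sqrt b ltac:(nra)); nra.
Qed.

Lemma sqrt_le_of_le_sq (a b : R) : 0 <= a -> b <= a ^ 2 -> sqrt b <= a.
Proof. intros Ha H; rewrite <- (sqrt_pow2 a Ha); exact (sqrt_le_1_alt _ _ H). Qed.

Lemma le_inv_sqrt (a b : R) : 0 < b -> a ^ 2 * b <= 1 -> a <= / sqrt b.
Proof.
  intros Hb H; rewrite <- sqrt_inv; apply le_sqrt_of_sq_le.
  apply (Rmult_le_reg_r b _ _ Hb); rewrite Rinv_l; lra.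
Qed.

Lemma inv_sqrt_le (a b : R) : 0 <= a -> 0 < b -> 1 <= a ^ 2 * b -> / sqrt b <= a.
Proof.
  intros Ha Hb H; rewrite <- sqrt_inv; apply (sqrt_le_of_le_sq _ _ Ha).
  apply (Rmult_le_reg_r b _ _ Hb); rewrite Rinv_l; lra.
Qed.

Definition ellK_param (m : R) : R :=
  RInt (fun t => / sqrt (1 - m * sin t ^ 2)) 0 (PI / 2).
Definition ellE_param (m : R) : R :=
  RInt (fun t => sqrt (1 - m * sin t ^ 2)) 0 (PI / 2).
Definition fq_param (m : R) : R :=
  (4 * m ^ 2 - 5 * m + 1) * ellK_param m + (- 8 * m ^ 2 + 8 * m - 1) * ellE_param m.

Lemma fq_param_sq (q : R) : fq q = fq_param (q ^ 2).
Proof.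
  unfold fq, fq_param, ellK, ellE, ellK_param, ellE_param.
  replace (q ^ 4) with ((q ^ 2) ^ 2) by ring; reflexivity.
Qed.

Section ParameterBounds.

Variable m : R.
Hypothesis m_range : 0 <= m < 1.

Let one_sub_pos (x : R) : 0 <= x <= 1 -> 0 < 1 - m * x.
Proof. intros; nra. Qed.

Let continuous_sqrt_param (x : R) : 0 <= x <= 1 -> continuous (fun x => sqrt (1 - m * x)) x.
Proof.
  intros Hx; apply (ex_derive_continuous (V := R_NormedModule)).
  auto_derive; pose proof (one_sub_pos x Hx); lra.
Qed.

Let continuous_inv_sqrt_param (x : R) :
  0 <= x <= 1 -> continuous (fun x => / sqrt (1 - m * x)) x.
Proof.
  intros Hx; apply (ex_derive_continuous (V := R_NormedModule)).
  pose proof (one_sub_pos x Hx) as H; pose proof (sqrt_lt_R0 _ H).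
  auto_derive; unfold Rminus in *; repeat split; lra.
Qed.

Lemma ellE_param_lb (A B : R) :
  (forall x, 0 <= x <= 1 -> (A + B * x) ^ 2 <= 1 - m * x) ->
  A * (PI / 2) + B * (PI / 4) <= ellE_param m.
Proof.
  intros H; apply (RInt_comp_sin_sq_lb (fun x => sqrt (1 - m * x))); [exact continuous_sqrt_param|].
  intros x Hx; exact (le_sqrt_of_sq_le _ _ (H x Hx)).
Qed.

Lemma ellE_param_ub (A B : R) :
  (forall x, 0 <= x <= 1 -> 0 <= A + B * x /\ 1 - m * x <= (A + B * x) ^ 2) ->
  ellE_param m <= A * (PI / 2) + B * (PI / 4).
Proof.
  intros H; apply (RInt_comp_sin_sq_ub (fun x => sqrt (1 - m * x))); [exact continuous_sqrt_param|].
  intros x Hx; destruct (H x Hx) as [Hnn Hsq]; exact (sqrt_le_of_le_sq _ _ Hnn Hsq).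
Qed.

Lemma ellK_param_lb (A B : R) :
  (forall x, 0 <= x <= 1 -> (A + B * x) ^ 2 * (1 - m * x) <= 1) ->
  A * (PI / 2) + B * (PI / 4) <= ellK_param m.
Proof.
  intros H; apply (RInt_comp_sin_sq_lb (fun x => / sqrt (1 - m * x))).
  - exact continuous_inv_sqrt_param.
  - intros x Hx; exact (le_inv_sqrt _ _ (one_sub_pos x Hx) (H x Hx)).
Qed.

Lemma ellK_param_ub (A B : R) :
  (forall x, 0 <= x <= 1 -> 0 <= A + B * x /\ 1 <= (A + B * x) ^ 2 * (1 - m * x)) ->
  ellK_param m <= A * (PI / 2) + B * (PI / 4).
Proof.
  intros H; apply (RInt_comp_sin_sq_ub (fun x => / sqrt (1 - m * x))).
  - exact continuous_inv_sqrt_param.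
  - intros x Hx; destruct (H x Hx) as [Hnn Hsq].
    exact (inv_sqrt_le _ _ Hnn (one_sub_pos x Hx) Hsq).
Qed.

End ParameterBounds.

Lemma fq_param_3_5_pos : 0 < fq_param (3 / 5).
Proof.
  (* fq_param (3/5) = (23 E - 14 K) / 25 *)
  assert (HK : ellK_param (3 / 5) <= 1 * (PI / 2) + 291 / 500 * (PI / 4)).
  { apply ellK_param_ub; [lra|]; intros x Hx; split; [nra|].
    assert (0 <= x * (1 - x)) by nra; assert (0 <= x * x * (1 - x)) by nra; nra. }
  assert (HE : 1 * (PI / 2) + - 46 / 125 * (PI / 4) <= ellE_param (3 / 5)).
  { apply ellE_param_lb; [lra|]; intros x Hx.
    assert (0 <= x * (1 - x)) by nra; assert (0 <= x * x * (1 - x)) by nra; nra. }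
  unfold fq_param; pose proof PI_RGT_0; nra.
Qed.

Lemma fq_param_2_3_neg : fq_param (2 / 3) < 0.
Proof.
  (* fq_param (2/3) = (7 E - 5 K) / 9 *)
  assert (HK : 9 / 10 * (PI / 2) + 6 / 10 * (PI / 4) <= ellK_param (2 / 3)).
  { apply ellK_param_lb; [lra|]; intros x Hx.
    assert (0 <= x * (x - 3 / 4) ^ 2) by (apply Rmult_le_pos; [lra | apply pow2_ge_0]).
    assert (0 <= (x - 15 / 32) ^ 2) by apply pow2_ge_0; nra. }
  assert (HE : ellE_param (2 / 3) <= 1025 / 1000 * (PI / 2) + - 41 / 100 * (PI / 4)).
  { apply ellE_param_ub; [lra|]; intros x Hx; split; [nra|].
    assert (0 <= (x - 1 / 2) ^ 2) by apply pow2_ge_0; nra. }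
  unfold fq_param; pose proof PI_RGT_0; nra.
Qed.

Lemma lt_root_of_pos (f : R -> R) (b z p : R) :
  f z = 0 -> (forall q, z < q < b -> f q < 0) -> p < b -> 0 < f p -> p < z.
Proof.
  intros Hz Hneg Hpb Hp; destruct (Rlt_or_le p z) as [|Hzp]; [assumption|].
  destruct (Rle_lt_or_eq_dec _ _ Hzp) as [Hlt| <-]; [|lra].
  pose proof (Hneg p (conj Hlt Hpb)); lra.
Qed.

Lemma root_lt_of_neg (f : R -> R) (a z p : R) :
  f z = 0 -> (forall q, a <= q < z -> 0 < f q) -> a <= p -> f p < 0 -> z < p.
Proof.
  intros Hz Hpos Hap Hp; destruct (Rlt_or_le z p) as [|Hpz]; [assumption|].
  destruct (Rle_lt_or_eq_dec _ _ Hpz) as [Hlt| ->]; [|lra].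
  pose proof (Hpos p (conj Hap Hlt)); lra.
Qed.

Theorem lemma2p5 (qh : R) :
  / sqrt 2 <= qh < 1 ->
  fq qh = 0 ->
  (forall q, / sqrt 2 <= q < qh -> 0 < fq q) ->
  (forall q, qh < q < 1 -> fq q < 0) ->
  3 / 5 < qh ^ 2 < 2 / 3.
Proof.
  intros [Hlo Hhi] Hzero Hpos Hneg.
  assert (Hsq35 : sqrt (3 / 5) ^ 2 = 3 / 5) by (apply pow2_sqrt; lra).
  assert (Hsq23 : sqrt (2 / 3) ^ 2 = 2 / 3) by (apply pow2_sqrt; lra).
  assert (Hlo_23 : / sqrt 2 <= sqrt (2 / 3)).
  { rewrite <- sqrt_inv; apply sqrt_le_1_alt; lra. }
  assert (Hhi_35 : sqrt (3 / 5) < 1).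
  { rewrite <- sqrt_1; apply sqrt_lt_1_alt; lra. }
  assert (Hlt35 : sqrt (3 / 5) < qh).
  { apply (lt_root_of_pos fq 1); auto.
    rewrite fq_param_sq, Hsq35; exact fq_param_3_5_pos. }
  assert (Hgt23 : qh < sqrt (2 / 3)).
  { apply (root_lt_of_neg fq (/ sqrt 2)); auto.
    rewrite fq_param_sq, Hsq23; exact fq_param_2_3_neg. }
  pose proof (sqrt_pos (3 / 5)); split; nra.
Qed.
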